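(* Let $X$ be a compact metric space with metric $d$, $T:X\to X$ continuous, and $\Phi=\{\phi_n\}_{n\ge1}$ a supadditive potential on $X$. Fix a positive integer $k$. Then there is a constant $C$ such that for every $\eta>0$ there exists $\epsilon_0>0$ such that for every $0<\epsilon<\epsilon_0$, every $n\ge1$ and every $x\in X$, \[ \phi_n(x)\ge\sup_{y\in B_n(x,\epsilon)}\sum_{i=0}^{n-1}\frac1k\phi_k(T^iy)-n\eta-C. \]
   Context: A supadditive potential is a sequence of continuous $\phi_n:X\to\mathbb{R}$ with $\phi_{n+m}(x)\ge\phi_n(x)+\phi_m(T^nx)$ for all $x\in X$, $n,m\ge1$. $B_n(x,\epsilon)=\{y\in X:d(T^ix,T^iy)<\epsilon\ \text{for}\ 0\le i\le n-1\}$. *)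

From HB Require Import structures.
From mathcomp Require Import all_boot all_order all_algebra.
From mathcomp Require Import all_classical all_reals all_analysis.
Set Implicit Arguments. Unset Strict Implicit. Unset Printing Implicit Defensive.
Import Order.TTheory GRing.Theory Num.Theory.
Import numFieldTopology.Exports numFieldNormedType.Exports.
Local Open Scope classical_set_scope.
Local Open Scope ring_scope.

Definition supadditive_potential {R : realType} {X : topologicalType}
  (T : X -> X) (phi : nat -> X -> R) : Prop :=
  (forall n, (1 <= n)%N -> continuous (phi n)) /\
  (forall (n m : nat) (x : X), (1 <= n)%N -> (1 <= m)%N ->
     phi n x + phi m (iter n T x) <= phi (n + m)%N x).

Definition bowen_ball {R : realType} {X : metricType R}
  (T : X -> X) (n : nat) (x : X) (eps : R) : set X :=
  [set y | forall i : nat, (i < n)%N -> mdist (iter i T x) (iter i T y) < eps].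

From HB Require Import structures.
From mathcomp Require Import all_boot all_order all_algebra.
From mathcomp Require Import all_classical all_reals all_analysis.
From mathcomp Require Import lra zify.
Import Order.TTheory GRing.Theory Num.Theory.
Import numFieldTopology.Exports numFieldNormedType.Exports.
Local Open Scope classical_set_scope.
Local Open Scope ring_scope.

(* Splitting [0, n) into the k residue classes of the blocks [l k, (l+1) k) and
   applying supadditivity along each class gives, for every offset j < k,
   phi_n(x) >= sum_l phi_k(T^(lk+j) x) - 2B, where B bounds |phi_m| for
   m <= 2k (compactness).  Averaging over j yields
   sum_(i<n) phi_k(T^i x) <= k phi_n(x) + 4kB.  On a Bowen ball the Birkhoff
   sums of phi_k at x and y differ by at most n k eta once eps is below a
   modulus of uniform continuity of phi_k, so C := 4B works. *)

Lemma continuous_mdist {R : realType} {X : metricType R} {f : X -> R} (x : X) :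
  continuous f -> forall e, 0 < e ->
  exists2 d, 0 < d & forall y, mdist x y < d -> `|f x - f y| < e.
Proof.
move=> cf e e0.
have fx_near : \forall y \near x, `|f x - f y| < e.
  exact: (proj1 (cvgrPdist_lt _ _) (cf x) e e0).
have [d d0 fx_ball] := proj1 (metricType_numDomainType.nbhs_mdistP x _) fx_near.
by exists d => // y xy; apply: fx_ball.
Qed.

Lemma compact_mdist_unif_continuous {R : realType} {X : metricType R}
    {f : X -> R} :
  compact [set: X] -> continuous f -> forall e, 0 < e ->
  exists2 d, 0 < d & forall a b, mdist a b < d -> `|f a - f b| < e.
Proof.
move=> cX cf e e0.
pose P (d : R) (z : X) := forall w, mdist z w < d -> `|f z - f w| < e.
have near_cover : \forall d \near (0 : R)^'+, [set: X] `<=` P d.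
  apply: (proj1 (compact_near_coveringP _) cX) => x _.
  have e2 : 0 < e / 2 by rewrite divr_gt0.
  have [del del0 Hx] := continuous_mdist x cf (e / 2) e2.
  have del2 : 0 < del / 2 by rewrite divr_gt0.
  near=> z d => w zw.
  have xz : mdist x z < del / 2.
    near: z; apply/(proj2 (metricType_numDomainType.nbhs_mdistP x _)).
    by exists (del / 2).
  have dd : d < del / 2 by near: d; apply: nbhs_right_lt.
  have fxz : `|f x - f z| < e / 2.
    by apply: Hx; rewrite (lt_le_trans xz)// ler_pdivrMr// ler_peMr ?ler1n ?ltW.
  have fxw : `|f x - f w| < e / 2.
    apply: Hx; rewrite (le_lt_trans (metric_triangle x z w))//.
    by rewrite [del]splitr ltrD// (lt_trans zw).
  by rewrite (le_lt_trans (ler_distD (f x) _ _))// distrC [e]splitr ltrD.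
near (0 : R)^'+ => d.
exists d; first by near: d; apply: nbhs_right_gt.
by move=> a b ab; apply: (near near_cover d).
Unshelve. all: end_near. Qed.

Lemma compact_continuous_bounded {R : realType} {X : metricType R}
    {f : X -> R} :
  compact [set: X] -> continuous f -> exists M, forall z, `|f z| <= M.
Proof.
move=> cX cf.
have [M [Mr HM]] := compact_bounded
  (continuous_compact (continuous_subspaceT cf) cX).
exists (`|M| + 1) => z; apply: (HM (`|M| + 1)); last by exists z.
by rewrite (le_lt_trans (real_ler_norm Mr))// ltrDl.
Qed.

Lemma compact_bounded_family {R : realType} {X : metricType R}
    (phi : nat -> X -> R) (N : nat) :
  compact [set: X] -> (forall n, (1 <= n)%N -> continuous (phi n)) ->
  exists B, forall m z, (1 <= m)%N -> (m <= N)%N -> `|phi m z| <= B.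
Proof.
move=> cX cphi; elim: N => [|N [B HB]]; first by exists 0 => m z; lia.
have [M HM] := compact_continuous_bounded cX (cphi N.+1 isT).
exists (`|B| + `|M|) => m z m1; rewrite leq_eqVlt => /orP[/eqP ->|mN].
  by rewrite (le_trans (HM z))// (le_trans (ler_norm M))// lerDr.
by rewrite (le_trans (HB m z m1 mN))// (le_trans (ler_norm B))// lerDl.
Qed.

Lemma sum_nat_mul_shift {V : nmodType} (k p : nat) (G : nat -> V) :
  \sum_(0 <= i < p * k) G i = \sum_(0 <= l < p) \sum_(0 <= j < k) G (l * k + j)%N.
Proof.
rewrite big_nat_mul; apply: eq_bigr => l _.
by rewrite -{1}[(l * k)%N]add0n big_addn mulSn addnK; under eq_bigr do rewrite addnC.
Qed.

Section SupadditiveBirkhoffBound.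
Context {R : realType} {X : Type} {T : X -> X} {phi : nat -> X -> R}.
Hypothesis phi_supadd : forall (n m : nat) (x : X), (1 <= n)%N -> (1 <= m)%N ->
  phi n x + phi m (iter n T x) <= phi (n + m)%N x.

Lemma supadditive_sum_blocks (k p : nat) (y : X) : (1 <= k)%N -> (1 <= p)%N ->
  \sum_(0 <= l < p) phi k (iter (l * k) T y) <= phi (p * k) y.
Proof.
move=> k1; elim: p => [//|[|p] IH] _; first by rewrite big_nat1 mul1n.
rewrite big_nat_recr //= [(p.+2 * k)%N]mulSnr.
have pk1 : (1 <= p.+1 * k)%N by rewrite muln_gt0 k1.
apply: le_trans _ (phi_supadd (p.+1 * k)%N k y pk1 k1).
by rewrite lerD2r IH.
Qed.

Context {k : nat} {B : R}.
Hypothesis k_gt0 : (0 < k)%N.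
Hypothesis phi_bounded : forall m z, (1 <= m)%N -> (m <= 2 * k)%N ->
  `|phi m z| <= B.

Lemma phi_ge_bound m z : (1 <= m)%N -> (m <= 2 * k)%N -> - B <= phi m z.
Proof. by move=> m1 mk; have := phi_bounded m z m1 mk; rewrite ler_norml => /andP[]. Qed.

Lemma phi_le_bound m z : (1 <= m)%N -> (m <= 2 * k)%N -> phi m z <= B.
Proof. by move=> m1 mk; have := phi_bounded m z m1 mk; rewrite ler_norml => /andP[]. Qed.

Lemma bound_ge0 (z : X) : 0 <= B.
Proof. by apply: le_trans (normr_ge0 _) (phi_bounded 1 z _ _); lia. Qed.

Lemma phi_drop_prefix n j x : (j < n)%N -> (j <= 2 * k)%N ->
  - B + phi (n - j) (iter j T x) <= phi n x.
Proof.
case: j => [|j] jn jk; first by rewrite subn0 gerDr oppr_le0 (bound_ge0 x).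
have nj1 : (1 <= n - j.+1)%N by lia.
have := phi_supadd j.+1 (n - j.+1)%N x isT nj1.
rewrite subnKC 1?ltnW // => supadd; apply: le_trans _ supadd.
by rewrite lerD2r phi_ge_bound.
Qed.

Lemma phi_ge_shifted_blocks n x j : (2 * k <= n)%N -> (j < k)%N ->
  \sum_(0 <= l < (n %/ k).-1) phi k (iter (l * k + j) T x) - (B + B) <= phi n x.
Proof.
move=> kn jk; set p := (n %/ k).-1; set y := iter j T x.
have q2 : (2 <= n %/ k)%N by rewrite leq_divRL.
have q_eq : (n %/ k = p.+1)%N by rewrite /p prednK // ltnW.
have n_split : (p * k + k + n %% k = n)%N by rewrite -mulSnr -q_eq -divn_eq.
have r_lt := ltn_pmod n k_gt0.
have p1 : (1 <= p)%N by lia.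
have pk1 : (1 <= p * k)%N by rewrite muln_gt0 p1 k_gt0.
have r1 : (1 <= n - j - p * k)%N by lia.
have r2k : (n - j - p * k <= 2 * k)%N by lia.
have head : - B + phi (n - j)%N y <= phi n x by apply: phi_drop_prefix; lia.
have middle := phi_supadd (p * k)%N (n - j - p * k)%N y pk1 r1.
rewrite (_ : p * k + (n - j - p * k) = n - j)%N in middle; last by lia.
have tail := phi_ge_bound (n - j - p * k)%N (iter (p * k) T y) r1 r2k.
have blocks := supadditive_sum_blocks k p y k_gt0 p1.
under eq_bigr do rewrite iterD.
by move: head middle tail blocks; rewrite -/y; lra.
Qed.

Lemma birkhoff_sum_le_bound a b x :
  \sum_(a <= i < b) phi k (iter i T x) <= (b - a)%:R * B.
Proof.
rewrite mulr_natl -sumr_const_nat; apply: ler_sum => i _.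
by apply: phi_le_bound; lia.
Qed.

Lemma birkhoff_sum_le_phi n x : (1 <= n)%N ->
  \sum_(0 <= i < n) phi k (iter i T x) <= k%:R * phi n x + k%:R * (4 * B).
Proof.
move=> n1; have kB : 0 <= k%:R * B by rewrite mulr_ge0 ?(bound_ge0 x).
have [n_lt|kn] := ltnP n (2 * k).
  have short := birkhoff_sum_le_bound 0 n x.
  have nB : (n - 0)%:R * B <= 2 * (k%:R * B).
    by rewrite mulrA -natrM ler_wpM2r ?(bound_ge0 x) // ler_nat; lia.
  have phi_n : k%:R * - B <= k%:R * phi n x.
    by rewrite ler_wpM2l // phi_ge_bound //; lia.
  by move: short nB phi_n kB; lra.
set p := (n %/ k).-1.
have tail_len : (p * k <= n)%N /\ (n - p * k <= 2 * k)%N.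
  have q2 : (2 <= n %/ k)%N by rewrite leq_divRL.
  have q_eq : (n %/ k = p.+1)%N by rewrite /p prednK // ltnW.
  have := ltn_pmod n k_gt0; have := divn_eq n k; rewrite q_eq mulSnr.
  move: (n %% k)%N (p * k)%N => r pk ->; lia.
rewrite (@big_cat_nat _ _ _ (p * k)%N) //=; last by case: tail_len.
have tail := birkhoff_sum_le_bound (p * k)%N n x.
have tailB : (n - p * k)%:R * B <= 2 * (k%:R * B).
  by rewrite mulrA -natrM ler_wpM2r ?(bound_ge0 x) // ler_nat; case: tail_len.
have blocks : \sum_(0 <= j < k)
    (\sum_(0 <= l < p) phi k (iter (l * k + j) T x) - (B + B))
    <= \sum_(0 <= j < k) phi n x.
  by apply: ler_sum_nat => j /andP[_ jk]; apply: phi_ge_shifted_blocks.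
rewrite sumrB !sumr_const_nat subn0 exchange_big_nat /= in blocks.
rewrite -[phi n x *+ k]mulr_natl -[(B + B) *+ k]mulr_natl in blocks.
by rewrite sum_nat_mul_shift; move: tail tailB blocks kB; lra.
Qed.

End SupadditiveBirkhoffBound.

Lemma bowen_ball_sum_le {R : realType} {X : metricType R} (T : X -> X)
    (f : X -> R) {d e eps : R} {n : nat} {x y : X} :
  (forall a b, mdist a b < d -> `|f a - f b| < e) -> eps <= d ->
  bowen_ball T n x eps y ->
  \sum_(0 <= i < n) f (iter i T y) <= \sum_(0 <= i < n) f (iter i T x) + n%:R * e.
Proof.
move=> f_unif eps_le y_ball.
rewrite mulr_natl -[n in e *+ n]subn0 -sumr_const_nat -big_split /=.
apply: ler_sum_nat => i /andP[_ i_lt].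
have := f_unif _ _ (lt_le_trans (y_ball i i_lt) eps_le).
by rewrite ltr_norml => /andP[? _]; lra.
Qed.

Theorem mainTheorem13 (R : realType) (X : metricType R) (T : X -> X)
  (phi : nat -> X -> R) (k : nat) :
  compact [set: X] ->
  continuous T ->
  supadditive_potential T phi ->
  (0 < k)%N ->
  exists C : R, forall eta : R, 0 < eta ->
    exists eps0 : R, 0 < eps0 /\
      forall eps : R, 0 < eps -> eps < eps0 ->
      forall (n : nat) (x : X), (1 <= n)%N ->
        sup [set (\sum_(0 <= i < n) (k%:R)^-1 * phi k (iter i T y))
             | y in bowen_ball T n x eps] - n%:R * eta - C <= phi n x.
Proof.
move=> cX _ [cphi phi_supadd] k_gt0.
have [B phi_bounded] := compact_bounded_family phi (2 * k) cX cphi.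
exists (4 * B) => eta eta_gt0.
have k_pos : 0 < k%:R :> R by rewrite ltr0n.
have [d d_gt0 phi_k_unif] := compact_mdist_unif_continuous cX (cphi k k_gt0)
  _ (mulr_gt0 k_pos eta_gt0).
exists d; split => // eps eps_gt0 eps_lt n x n1.
have birkhoff := birkhoff_sum_le_phi phi_supadd k_gt0 phi_bounded n x n1.
suff : sup [set (\sum_(0 <= i < n) (k%:R)^-1 * phi k (iter i T y))
    | y in bowen_ball T n x eps] <= phi n x + n%:R * eta + 4 * B by lra.
apply: ge_sup.
  by exists (\sum_(0 <= i < n) (k%:R)^-1 * phi k (iter i T x)), x => // i _;
    rewrite mdistxx.
move=> _ [y y_ball <-]; rewrite -mulr_sumr ler_pdivrMl //.
have := bowen_ball_sum_le T (phi k) phi_k_unif (ltW eps_lt) y_ball.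
by rewrite !mulrDr mulrCA; move: birkhoff; lra.
Qed.
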